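(* Let $\mathcal A$ be a finite uniform non-associative algebra and $\Rsh$ a projection operator from $\mathcal A$ to another non-associative algebra. If $\Rsh$ is superdistributive over $\diamond$ on the set of atoms of $\mathcal A$, then $\Rsh$ is superdistributive over $\diamond$ on $\mathcal A$.
   Context: A finite non-associative algebra is a tuple $(\mathcal A,\cup,\neg,\emptyset,\mathcal B,\diamond,\overline{\cdot},e)$ where $(\mathcal A,\cup,\neg,\emptyset,\mathcal B)$ is a finite Boolean algebra and for all $x,y,z$: $\overline{\overline x}=x$, $\overline{x\cup y}=\overline x\cup\overline y$, $\overline{x\diamond y}=\overline y\diamond\overline x$, $e\diamond x=x\diamond e=x$, $x\diamond(y\cup z)=(x\diamond y)\cup(x\diamond z)$, $(x\diamond y)\cap\overline z=\emptyset\iff(y\diamond z)\cap\overline x=\emptyset$. $r\subseteq r'$ means $r\cup r'=r'$; atoms are the basic relations. The algebra is uniform if $b\diamond b'\neq\emptyset$ for all atoms $b,b'$. A projection operator from $\mathcal A$ to $\mathcal A'$ is a map $\Rsh$ with $\Rsh(r\cup r')=\Rsh r\cup\Rsh r'$ and $\Rsh\overline r=\overline{\Rsh r}$. $\Rsh$ is superdistributive over $\diamond$ on a subset $X\subseteq\mathcal A$ if for all $r,r'\in X$ with $r\diamond r'\neq\emptyset$, $(\Rsh r)\diamond(\Rsh r')\subseteq\Rsh(r\diamond r')$. *)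

From HB Require Import structures.
From mathcomp Require Import all_boot all_order.
Set Implicit Arguments. Unset Strict Implicit. Unset Printing Implicit Defensive.
Import Order.TTheory.
Local Open Scope order_scope.

(* The underlying finite Boolean algebra (A, ∪, ¬, ∅, B) is a finite
   complemented distributive lattice with top and bottom:
   ∪ = `|`, ∩ = `&`, ¬ = ~`, ∅ = \bot, B = \top. *)

Definition bsub {d} {T : finCTBDistrLatticeType d} (r r' : T) : Prop :=
  r `|` r' = r'.

Definition is_atom {d} {T : finCTBDistrLatticeType d} (b : T) : Prop :=
  b <> \bot /\ forall x : T, bsub x b -> x = \bot \/ x = b.

Record naalg {d} (T : finCTBDistrLatticeType d) := NAAlg {
  comp : T -> T -> T;
  conv : T -> T;
  unit : T;
  conv_invol : forall x, conv (conv x) = x;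
  conv_join : forall x y, conv (x `|` y) = conv x `|` conv y;
  conv_comp : forall x y, conv (comp x y) = comp (conv y) (conv x);
  unit_l : forall x, comp unit x = x;
  unit_r : forall x, comp x unit = x;
  comp_joinr : forall x y z, comp x (y `|` z) = comp x y `|` comp x z;
  comp_triangle : forall x y z,
    (comp x y `&` conv z = \bot) <-> (comp y z `&` conv x = \bot)
}.

Definition uniform {d} {T : finCTBDistrLatticeType d} (A : naalg T) : Prop :=
  forall b b' : T, is_atom b -> is_atom b' -> comp A b b' <> \bot.

Definition projection {d d'} {T : finCTBDistrLatticeType d}
  {T' : finCTBDistrLatticeType d'} (A : naalg T) (A' : naalg T')
  (P : T -> T') : Prop :=
  (forall r r', P (r `|` r') = P r `|` P r') /\
  (forall r, P (conv A r) = conv A' (P r)).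

Definition superdistributive_on {d d'} {T : finCTBDistrLatticeType d}
  {T' : finCTBDistrLatticeType d'} (A : naalg T) (A' : naalg T')
  (P : T -> T') (X : T -> Prop) : Prop :=
  forall r r', X r -> X r' -> comp A r r' <> \bot ->
    bsub (comp A' (P r) (P r')) (P (comp A r r')).

From mathcomp Require Import all_boot all_order.
Set Implicit Arguments. Unset Strict Implicit. Unset Printing Implicit Defensive.
Import Order.TTheory Order.CBDistrLatticeTheory.
Local Open Scope order_scope.

(* Every nonzero relation is a join of atoms, and both [comp] and the
   projection distribute over joins; so superdistributivity propagates from
   pairs of atoms (whose composition is nonzero by uniformity) to arbitrary
   pairs, one argument at a time. *)

Lemma bsubP {d} {T : finCTBDistrLatticeType d} (x y : T) :
  reflect (bsub x y) (x <= y).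
Proof. exact: join_idPr. Qed.

Lemma ltn_card_downset {d} {T : finPOrderType d} (x y : T) :
  x < y -> (#|[pred z | (z <= x)%O]| < #|[pred z | (z <= y)%O]|)%N.
Proof.
move=> xy; apply: proper_card; apply/properP; split.
  by apply/subsetP => z; rewrite !inE => zx; apply: le_trans zx (ltW xy).
by exists y; rewrite !inE ?lexx // lt_geF.
Qed.

Section AtomJoinInduction.

Variables (d : Order.disp_t) (T : finCTBDistrLatticeType d).

Lemma atom_or_join_lt (x : T) : x != \bot ->
  is_atom x \/
  exists y z, [/\ \bot < y, \bot < z, y < x, z < x & x = y `|` z].
Proof.
move=> x0; case: (boolP [exists y, (\bot < y) && (y < x)]).
  case/existsP=> y /andP[y0 yx]; right; exists y, (x `\` y); split=> //.
  - exact: lt0B.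
  - rewrite lt_neqAle leBx andbT; apply: contraTneq y0 => xBy.
    by rewrite -(meet_idPl (ltW yx)) -xBy diffKI ltxx.
  - by rewrite leBKU // ltW.
move/existsPn=> noy; left; split; first exact/eqP.
move=> w /bsubP wx; case: (eqVneq w \bot) => [|w0]; [left | right] => //.
by apply/eqP; move: (noy w); rewrite lt0x w0 lt_neqAle wx andbT negbK.
Qed.

Lemma nonbot_atom_join_ind (Q : T -> Prop) :
  (forall b, is_atom b -> Q b) ->
  (forall x y, Q x -> Q y -> Q (x `|` y)) ->
  forall x, x != \bot -> Q x.
Proof.
move=> Qatom QU x; move: {2}#|_| (leqnn #|[pred z | (z <= x)%O]|) => n.
elim: n x => [|n IH] x xn x0.
  by move: xn; rewrite leqn0 => /eqP/card0_eq/(_ x); rewrite inE lexx.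
case: (atom_or_join_lt x0) => [/Qatom //|[y [z [y0 z0 yx zx ->]]]].
by apply: QU; apply: IH; rewrite -?lt0x // -ltnS;
  apply: leq_trans (ltn_card_downset _) xn.
Qed.

End AtomJoinInduction.

Section NonAssociativeAlgebra.

Variables (d : Order.disp_t) (T : finCTBDistrLatticeType d) (A : naalg T).

Lemma comp_joinl (x y z : T) :
  comp A (x `|` y) z = comp A x z `|` comp A y z.
Proof.
rewrite -[LHS](conv_invol A) conv_comp conv_join comp_joinr conv_join.
by rewrite !conv_comp !conv_invol.
Qed.

Lemma conv_le (x y : T) : x <= y -> conv A x <= conv A y.
Proof. by move/join_idPr=> xy; apply/join_idPr; rewrite -conv_join xy. Qed.

Lemma conv0 : conv A \bot = \bot.
Proof.
apply/eqP; rewrite -lex0 -[X in _ <= X](conv_invol A).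
by apply: conv_le; rewrite le0x.
Qed.

(* By the triangle law, [(x ◇ ⊥) ∩ conv z = ⊥] iff [(⊥ ◇ z) ∩ conv x = ⊥]
   iff [(z ◇ x) ∩ conv ⊥ = ⊥], which holds; now take [z := conv (x ◇ ⊥)]. *)
Lemma compx0 (x : T) : comp A x \bot = \bot.
Proof.
set z := conv A (comp A x \bot).
have /(comp_triangle A x) : comp A \bot z `&` conv A x = \bot.
  by apply/(comp_triangle A); rewrite conv0 meetx0.
by rewrite conv_invol meetxx.
Qed.

Lemma comp0x (x : T) : comp A \bot x = \bot.
Proof. by rewrite -[LHS](conv_invol A) conv_comp conv0 compx0 conv0. Qed.

End NonAssociativeAlgebra.

Section Superdistributivity.

Variables (d d' : Order.disp_t).
Variables (T : finCTBDistrLatticeType d) (T' : finCTBDistrLatticeType d').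
Variables (A : naalg T) (A' : naalg T') (P : T -> T').
Hypothesis P_join : forall r r', P (r `|` r') = P r `|` P r'.

Definition superdistributive_at (r r' : T) : Prop :=
  comp A' (P r) (P r') <= P (comp A r r').

Lemma superdistributive_atUl (r1 r2 r' : T) :
  superdistributive_at r1 r' -> superdistributive_at r2 r' ->
  superdistributive_at (r1 `|` r2) r'.
Proof.
by move=> h1 h2; rewrite /superdistributive_at !P_join !comp_joinl P_join leU2.
Qed.

Lemma superdistributive_atUr (r r1' r2' : T) :
  superdistributive_at r r1' -> superdistributive_at r r2' ->
  superdistributive_at r (r1' `|` r2').
Proof.
by move=> h1 h2; rewrite /superdistributive_at !P_join !comp_joinr P_join leU2.
Qed.

Hypothesis A_uniform : uniform A.
Hypothesis P_atoms : superdistributive_on A A' P is_atom.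

Lemma superdistributive_at_nonbot (r r' : T) :
  r != \bot -> r' != \bot -> superdistributive_at r r'.
Proof.
move=> r0 r'0; move: r r0; apply: nonbot_atom_join_ind; last first.
  by move=> ? ?; apply: superdistributive_atUl.
move=> b b_atom; move: r' r'0; apply: nonbot_atom_join_ind; last first.
  by move=> ? ?; apply: superdistributive_atUr.
by move=> b' b'_atom; apply/bsubP/P_atoms; last exact: A_uniform.
Qed.

End Superdistributivity.

Theorem proposition6p12 (d d' : Order.disp_t)
  (T : finCTBDistrLatticeType d) (T' : finCTBDistrLatticeType d')
  (A : naalg T) (A' : naalg T') (P : T -> T') :
  uniform A -> projection A A' P ->
  superdistributive_on A A' P is_atom ->
  superdistributive_on A A' P (fun _ => True).
Proof.
move=> A_uniform [P_join _] P_atoms r r' _ _ rr'0.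
apply/bsubP/superdistributive_at_nonbot => //; apply: contra_not_neq rr'0 => ->.
  exact: comp0x.
exact: compx0.
Qed.
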